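(* Let $n\ge 4$ and $2\le t\le n-2$. Under the permutation null distribution, for all $a,b\in\{1,2\}$, \[ \mathsf{cov}\big(W_a(t),D_b(t)\big)=0 . \] Consequently $W_1(t)\pm W_2(t)$ are each uncorrelated with $D_1(t)\pm D_2(t)$ (all four sign combinations), and more generally any linear combination of $W_1(t),W_2(t)$ is uncorrelated with any linear combination of $D_1(t),D_2(t)$.
   Context: Let $G_1,\dots,G_n$ be a sequence of observations (networks) and let $K_1,K_2$ be two real symmetric $n\times n$ kernel matrices computed from this sequence, with $(i,j)$ entry $k_{xij}$ of $K_x$, $x\in\{1,2\}$. The permutation null distribution assigns probability $1/n!$ to each of the $n!$ permutations of the sequence, i.e. the kernel matrices $K_x$ are replaced by $(k_{x\pi(i)\pi(j)})_{i,j}$ for a uniformly random permutation $\pi$ of $\{1,\dots,n\}$ (the same $\pi$ for both kernels); $\mathsf{E},\mathsf{var},\mathsf{cov}$ denote expectation, variance and covariance under this distribution. For $x\in\{1,2\}$ define \[ \alpha_x(t)=\frac{1}{t(t-1)}\sum_{i=1}^n\sum_{j\ne i}k_{xij}\mathbb{1}\{i,j\le t\},\qquad \beta_x(t)=\frac{1}{(n-t)(n-t-1)}\sum_{i=1}^n\sum_{j\ne i}k_{xij}\mathbb{1}\{i,j> t\}, \] \[ W_x(t)=\frac{t}{n}\alpha_x(t)+\frac{n-t}{n}\beta_x(t),\qquad D_x(t)=\frac{t(t-1)}{n(n-1)}\alpha_x(t)-\frac{(n-t)(n-t-1)}{n(n-1)}\beta_x(t). \] *)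

From HB Require Import structures.
From mathcomp Require Import all_boot all_order all_algebra all_fingroup.
Set Implicit Arguments. Unset Strict Implicit. Unset Printing Implicit Defensive.
Import Order.TTheory GRing.Theory Num.Theory.
Local Open Scope ring_scope.

Section Defs.
Variables (R : realFieldType) (n : nat).

(* Observations are indexed 0..n-1 (paper: 1..n); "i <= t" (1-based)
   becomes "(i < t)%N" (0-based), "i > t" becomes "(t <= i)%N". *)

Definition alpha (K : 'M[R]_n) (t : nat) (s : 'S_n) : R :=
  ((t * (t - 1))%:R)^-1 *
  \sum_(i < n) \sum_(j < n | j != i)
      K (s i) (s j) * ((i < t)%N && (j < t)%N)%:R.

Definition beta (K : 'M[R]_n) (t : nat) (s : 'S_n) : R :=
  (((n - t) * (n - t - 1))%:R)^-1 *
  \sum_(i < n) \sum_(j < n | j != i)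
      K (s i) (s j) * ((t <= i)%N && (t <= j)%N)%:R.

Definition Wstat (K : 'M[R]_n) (t : nat) (s : 'S_n) : R :=
  t%:R / n%:R * alpha K t s + (n - t)%:R / n%:R * beta K t s.

Definition Dstat (K : 'M[R]_n) (t : nat) (s : 'S_n) : R :=
  (t * (t - 1))%:R / (n * (n - 1))%:R * alpha K t s
  - ((n - t) * (n - t - 1))%:R / (n * (n - 1))%:R * beta K t s.

(* Permutation null distribution: uniform probability 1/n! on 'S_n. *)
Definition permE (X : 'S_n -> R) : R :=
  (n`!%:R)^-1 * \sum_(s : 'S_n) X s.

Definition permCov (X Y : 'S_n -> R) : R :=
  permE (fun s => X s * Y s) - permE X * permE Y.

End Defs.

From Pilot Require Import Defs.
From mathcomp Require Import all_boot all_order all_algebra all_fingroup.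
From mathcomp Require Import ring zify.

Set Implicit Arguments.
Unset Strict Implicit.
Unset Printing Implicit Defensive.

Import Order.TTheory GRing.Theory Num.Theory.
Local Open Scope ring_scope.

(* Both statistics are sums [pair_stat w K s] of the permuted kernel entries
   [K (s i) (s j)], i <> j, against a fixed weight [w].  The weight of [Dstat] is,
   up to a scalar, [[i < t] + [j < t] - 1], so [Dstat] is an affine combination
   of the point statistics [r (s k)], where [r u] is the off-diagonal mass of row
   and column [u] of the kernel.  The weight of [Wstat] is symmetric with all row
   sums equal to [1/n].  A sum over all permutations of [K (s i) (s j) * r (s k)]
   only depends on whether [k] is [i], [j] or neither, so the equal row and
   column sums make [sum_s Wstat s * r (s k)] independent of [k]; averaging over
   [k] then factorises it into [sum_s Wstat s * sum_s r (s k) / n!], which is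
   exactly the vanishing of the covariance. *)

Section PermutationMaps.
Variable n : nat.

Lemma perm_map2 (a0 a1 i j : 'I_n) : a0 != a1 -> i != j ->
  exists p : 'S_n, p a0 = i /\ p a1 = j.
Proof.
move=> a01 ij; pose p := tperm a0 i.
have pa0 : p a0 = i by rewrite tpermL.
have pa1 : p a1 != i by rewrite -pa0 (inj_eq perm_inj) eq_sym.
exists (p * tperm (p a1) j)%g; rewrite !permM pa0 tpermL.
by split=> //; rewrite tpermD // eq_sym.
Qed.

Lemma perm_map3 (a0 a1 a2 i j k : 'I_n) :
  a0 != a1 -> a0 != a2 -> a1 != a2 -> i != j -> i != k -> j != k ->
  exists p : 'S_n, [/\ p a0 = i, p a1 = j & p a2 = k].
Proof.
move=> a01 a02 a12 ij ik jk; have [p [pa0 pa1]] := perm_map2 a01 ij.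
have pa2i : p a2 != i by rewrite -pa0 (inj_eq perm_inj) eq_sym.
have pa2j : p a2 != j by rewrite -pa1 (inj_eq perm_inj) eq_sym.
exists (p * tperm (p a2) k)%g; rewrite !permM pa0 pa1 tpermL.
by split=> //; rewrite tpermD // eq_sym.
Qed.

End PermutationMaps.

Section PermutationSums.
Variables (R : realFieldType) (n : nat).
Implicit Types (M : 'M[R]_n) (r : 'I_n -> R) (X : 'S_n -> R).

Definition triple_sum M r (i j k : 'I_n) : R :=
  \sum_(s : 'S_n) M (s i) (s j) * r (s k).

Lemma triple_sum_perm M r (p : 'S_n) i j k :
  triple_sum M r (p i) (p j) (p k) = triple_sum M r i j k.
Proof.
by rewrite [RHS](reindex_inj (mulgI p)); apply: eq_bigr => s _; rewrite !permM.
Qed.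

Lemma triple_sum_pattern M r (a0 a1 a2 i j k : 'I_n) :
    a0 != a1 -> a0 != a2 -> a1 != a2 -> i != j ->
  triple_sum M r i j k = if k == i then triple_sum M r a0 a1 a0
                         else if k == j then triple_sum M r a0 a1 a1
                         else triple_sum M r a0 a1 a2.
Proof.
move=> a01 a02 a12 ij; have [p [pa0 pa1]] := perm_map2 a01 ij.
have [-> | ki] := eqVneq k i; first by rewrite -pa0 -pa1 triple_sum_perm.
have [-> | kj] := eqVneq k j; first by rewrite -pa0 -pa1 triple_sum_perm.
rewrite eq_sym in ki; rewrite eq_sym in kj.
have [q [qa0 qa1 qa2]] := perm_map3 a01 a02 a12 ij ki kj.
by rewrite -qa0 -qa1 -qa2 triple_sum_perm.
Qed.

Lemma sum_perm_point r (k k' : 'I_n) :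
  \sum_(s : 'S_n) r (s k) = \sum_(s : 'S_n) r (s k').
Proof.
by rewrite (reindex_inj (mulgI (tperm k k'))); apply: eq_bigr => s _; rewrite permM tpermL.
Qed.

Lemma sum_perm_point_mul X r (k : 'I_n) :
    (forall k', \sum_s X s * r (s k') = \sum_s X s * r (s k)) ->
  n%:R * \sum_s X s * r (s k) = (\sum_s X s) * \sum_u r u.
Proof.
move=> U_const.
transitivity (\sum_(k' < n) \sum_s X s * r (s k')).
  by rewrite (eq_bigr _ (fun k' _ => U_const k')) sumr_const card_ord mulr_natl.
rewrite exchange_big mulr_suml; apply: eq_bigr => s _.
by rewrite -mulr_sumr; congr (_ * _); apply/esym/reindex_inj/perm_inj.
Qed.

Lemma permCov_point_eq0 X r (k : 'I_n) :
    (forall k', \sum_s X s * r (s k') = \sum_s X s * r (s k)) ->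
  permCov X (fun s => r (s k)) = 0.
Proof.
move=> U_const; rewrite /permCov /Defs.permE.
have n_neq0 : n%:R != 0 :> R by rewrite pnatr_eq0 -lt0n (leq_ltn_trans _ (ltn_ord k)).
have N_neq0 : n`!%:R != 0 :> R by rewrite pnatr_eq0 -lt0n fact_gt0.
have nU := sum_perm_point_mul U_const.
have nV : n%:R * \sum_(s : 'S_n) r (s k) = n`!%:R * \sum_u r u.
  rewrite -[in RHS]card_Sn -sumr_const -(@sum_perm_point_mul (fun=> 1) r k) => [|k'].
    by congr (_ * _); apply: eq_bigr => s _; rewrite mul1r.
  rewrite (eq_bigr _ (fun (s : 'S_n) _ => mul1r (r (s k')))).
  rewrite (eq_bigr _ (fun (s : 'S_n) _ => mul1r (r (s k)))).
  exact: sum_perm_point.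
have UV : n`!%:R * \sum_(s : 'S_n) X s * r (s k) = (\sum_s X s) * \sum_(s : 'S_n) r (s k).
  by apply: (mulfI n_neq0); rewrite mulrCA nU [RHS]mulrCA nV; ring.
set U := \sum_s X s * r (s k) in UV *; set A := \sum_s X s in UV *.
set V := \sum_(s : 'S_n) r (s k) in UV *.
transitivity (n`!%:R^-1 * n`!%:R^-1 * (n`!%:R * U - A * V)); first by field.
by rewrite UV subrr mulr0.
Qed.

End PermutationSums.

Lemma sum_offdiag_swap (R : nmodType) n (F : 'I_n -> 'I_n -> R) :
  \sum_(i < n) \sum_(j < n | j != i) F i j = \sum_(j < n) \sum_(i < n | i != j) F i j.
Proof.
rewrite (exchange_big_dep xpredT) //=; apply: eq_bigr => j _.
by apply: eq_bigl => i; rewrite eq_sym.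
Qed.

Section PairStatistics.
Variables (R : realFieldType) (n : nat).
Implicit Types (M : 'M[R]_n) (s : 'S_n).

Definition pair_stat (w : 'I_n -> 'I_n -> R) (M : 'M[R]_n) (s : 'S_n) : R :=
  \sum_(i < n) \sum_(j < n | j != i) M (s i) (s j) * w i j.

Lemma sum_pair_stat_point w M r (k : 'I_n) :
  \sum_(s : 'S_n) pair_stat w M s * r (s k)
  = \sum_(i < n) \sum_(j < n | j != i) w i j * triple_sum M r i j k.
Proof.
under eq_bigr do rewrite mulr_suml; rewrite exchange_big; apply: eq_bigr => i _.
under eq_bigr do rewrite mulr_suml; rewrite exchange_big; apply: eq_bigr => j _.
by rewrite mulr_sumr; apply: eq_bigr => s _; ring.
Qed.

Definition rowcol_sum M (u : 'I_n) : R := \sum_(v < n | v != u) (M u v + M v u).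

Definition offdiag_sum M : R := \sum_(u < n) \sum_(v < n | v != u) M u v.

Lemma reindex_perm_neq s (F : 'I_n -> R) i :
  \sum_(j < n | j != i) F (s j) = \sum_(v < n | v != s i) F v.
Proof.
rewrite [RHS](reindex_inj (@perm_inj _ s)) /=.
by apply: eq_bigl => j; rewrite (inj_eq perm_inj).
Qed.

Lemma pair_stat_additive (u : 'I_n -> R) M s :
  pair_stat (fun i j => u i + u j - 1) M s
  = \sum_(k < n) u k * rowcol_sum M (s k) - offdiag_sum M.
Proof.
have rows : \sum_(i < n) \sum_(j < n | j != i) M (s i) (s j) * u i
            = \sum_(k < n) u k * \sum_(v < n | v != s k) M (s k) v.
  apply: eq_bigr => i _; rewrite -mulr_suml mulrC.
  by rewrite (reindex_perm_neq s (fun v => M (s i) v)).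
have cols : \sum_(i < n) \sum_(j < n | j != i) M (s i) (s j) * u j
            = \sum_(k < n) u k * \sum_(v < n | v != s k) M v (s k).
  rewrite sum_offdiag_swap; apply: eq_bigr => j _; rewrite -mulr_suml mulrC.
  by rewrite (reindex_perm_neq s (fun v => M v (s j))).
have all : \sum_(i < n) \sum_(j < n | j != i) M (s i) (s j) = offdiag_sum M.
  rewrite /offdiag_sum [RHS](reindex_inj (@perm_inj _ s)); apply: eq_bigr => i _.
  exact: (reindex_perm_neq s (fun v => M (s i) v)).
have split_rowcol : \sum_(k < n) u k * rowcol_sum M (s k)
    = \sum_(i < n) \sum_(j < n | j != i) M (s i) (s j) * u i
      + \sum_(i < n) \sum_(j < n | j != i) M (s i) (s j) * u j.
  rewrite rows cols -big_split; apply: eq_bigr => k _.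
  by rewrite /rowcol_sum big_split mulrDr.
rewrite /pair_stat -all split_rowcol -big_split -sumrB; apply: eq_bigr => i _.
by rewrite -big_split -sumrB; apply: eq_bigr => j _ /=; ring.
Qed.

End PairStatistics.

Section RegularWeights.
Variables (R : realFieldType) (n : nat) (w : 'I_n -> 'I_n -> R) (c : R).
Hypotheses (w_sym : forall i j, w i j = w j i)
           (w_row : forall i, \sum_(j < n | j != i) w i j = c).

Lemma regular_weight_col j : \sum_(i < n | i != j) w i j = c.
Proof. by rewrite -(w_row j); apply: eq_bigr => i _; exact: w_sym. Qed.

Lemma regular_weight_pattern (k : 'I_n) (x y z : R) :
  \sum_(i < n) \sum_(j < n | j != i)
      w i j * (if k == i then x else if k == j then y else z)
  = c * (x + y + (n%:R - 2) * z).
Proof.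
have other_rows i : i != k ->
    \sum_(j < n | j != i) w i j * (if k == i then x else if k == j then y else z)
    = w i k * (y - z) + c * z.
  move=> ik; rewrite eq_sym (negbTE ik) (bigD1 k) 1?eq_sym //= eqxx.
  have row_k : \sum_(j < n | (j != i) && (j != k)) w i j = c - w i k.
    by rewrite -(w_row i) [in RHS](bigD1 k) 1?eq_sym //= addrAC subrr add0r.
  under eq_bigr => j /andP[_ jk] do rewrite eq_sym (negbTE jk).
  by rewrite -mulr_suml row_k; ring.
rewrite (bigD1 k) //= eqxx -mulr_suml w_row (eq_bigr _ other_rows) big_split /=.
rewrite -mulr_suml sumr_const regular_weight_col cardC1 card_ord.
have n_pos : (0 < n)%N by apply: leq_ltn_trans (ltn_ord k).
by rewrite -(mulr_natr (c * z)) -[in RHS](prednK n_pos) mulrS; ring.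
Qed.

Lemma sum_pair_stat_point_regular M r (a0 a1 a2 k : 'I_n) :
    a0 != a1 -> a0 != a2 -> a1 != a2 ->
  \sum_(s : 'S_n) pair_stat w M s * r (s k)
  = c * (triple_sum M r a0 a1 a0 + triple_sum M r a0 a1 a1
         + (n%:R - 2) * triple_sum M r a0 a1 a2).
Proof.
move=> a01 a02 a12; rewrite sum_pair_stat_point -(regular_weight_pattern k).
apply: eq_bigr => i _; apply: eq_bigr => j ji.
by rewrite (triple_sum_pattern _ _ _ a01 a02 a12) // eq_sym.
Qed.

Lemma permCov_pair_stat_point M r (k : 'I_n) :
  (2 < n)%N -> permCov (pair_stat w M) (fun s => r (s k)) = 0.
Proof.
move=> n_gt2; apply: permCov_point_eq0 => k'.
pose a0 := Ordinal (ltnW (ltnW n_gt2)); pose a1 := Ordinal (ltnW n_gt2).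
pose a2 := Ordinal n_gt2.
by rewrite !(@sum_pair_stat_point_regular _ _ a0 a1 a2).
Qed.

End RegularWeights.

Section CovarianceAlgebra.
Variables (R : realFieldType) (n : nat).
Implicit Types (X Y : 'S_n -> R).

Lemma eq_permCov X X' Y Y' :
  X =1 X' -> Y =1 Y' -> permCov X Y = permCov X' Y'.
Proof.
move=> eX eY; rewrite /permCov /Defs.permE.
by congr (_ * _ - _ * _ * (_ * _)); apply: eq_bigr => s _; rewrite ?eX ?eY.
Qed.

Lemma permCov_sum_affine_r (I : finType) X (Y : I -> 'S_n -> R) (c : I -> R) b :
  permCov X (fun s => \sum_i c i * Y i s - b) = \sum_i c i * permCov X (Y i).
Proof.
have N_neq0 : n`!%:R != 0 :> R by rewrite pnatr_eq0 -lt0n fact_gt0.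
rewrite /permCov /Defs.permE; set A := \sum_(s : 'S_n) X s.
have sumXY : \sum_(s : 'S_n) X s * (\sum_i c i * Y i s - b)
    = \sum_i c i * (\sum_(s : 'S_n) X s * Y i s) - b * A.
  transitivity (\sum_(s : 'S_n) (\sum_i c i * (X s * Y i s) - b * X s)).
    apply: eq_bigr => s _; rewrite mulrBr mulr_sumr (mulrC (X s)); congr (_ - _).
    by apply: eq_bigr => i _; ring.
  rewrite sumrB exchange_big /= mulr_sumr; congr (_ - _).
  by apply: eq_bigr => i _; rewrite mulr_sumr.
have sumY : \sum_(s : 'S_n) (\sum_i c i * Y i s - b)
    = \sum_i c i * (\sum_(s : 'S_n) Y i s) - b * n`!%:R.
  rewrite sumrB exchange_big /= sumr_const card_Sn mulr_natr; congr (_ - _).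
  by apply: eq_bigr => i _; rewrite mulr_sumr.
have -> : \sum_i c i * ((n`!%:R)^-1 * \sum_(s : 'S_n) X s * Y i s
                         - (n`!%:R)^-1 * A * ((n`!%:R)^-1 * \sum_(s : 'S_n) Y i s))
    = (n`!%:R)^-1 * \sum_i c i * (\sum_(s : 'S_n) X s * Y i s)
      - (n`!%:R)^-1 * A * ((n`!%:R)^-1 * \sum_i c i * (\sum_(s : 'S_n) Y i s)).
  rewrite [in RHS]mulr_sumr [X in _ - _ * X]mulr_sumr [X in _ - X]mulr_sumr -sumrB.
  by apply: eq_bigr => i _; ring.
by rewrite sumXY sumY; field.
Qed.

Lemma permCov_bilin X1 X2 Y1 Y2 (c1 c2 d1 d2 : R) :
  permCov (fun s => c1 * X1 s + c2 * X2 s) (fun s => d1 * Y1 s + d2 * Y2 s)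
  = c1 * d1 * permCov X1 Y1 + c1 * d2 * permCov X1 Y2
    + c2 * d1 * permCov X2 Y1 + c2 * d2 * permCov X2 Y2.
Proof.
rewrite /permCov /Defs.permE.
have e1 : \sum_(s : 'S_n) (c1 * X1 s + c2 * X2 s) * (d1 * Y1 s + d2 * Y2 s)
  = c1 * d1 * \sum_s X1 s * Y1 s + c1 * d2 * \sum_s X1 s * Y2 s
    + c2 * d1 * \sum_s X2 s * Y1 s + c2 * d2 * \sum_s X2 s * Y2 s.
  by rewrite !mulr_sumr -!big_split /=; apply: eq_bigr => s _; ring.
have e2 : \sum_(s : 'S_n) (c1 * X1 s + c2 * X2 s) = c1 * \sum_s X1 s + c2 * \sum_s X2 s.
  by rewrite !mulr_sumr -big_split.
have e3 : \sum_(s : 'S_n) (d1 * Y1 s + d2 * Y2 s) = d1 * \sum_s Y1 s + d2 * \sum_s Y2 s.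
  by rewrite !mulr_sumr -big_split.
by rewrite e1 e2 e3; ring.
Qed.

End CovarianceAlgebra.

Section Counting.
Variables (R : realFieldType) (n : nat).

Lemma sum_indicator_lt t : (t <= n)%N -> \sum_(j < n) ((j < t)%N)%:R = t%:R :> R.
Proof.
move=> tn; transitivity (\sum_(j < t) (1 : R)); last by rewrite sumr_const card_ord.
by rewrite (big_ord_widen n (fun=> 1) tn) [RHS]big_mkcond; apply: eq_bigr => j _; case: ifP.
Qed.

Lemma sum_indicator_ge t : (t <= n)%N -> \sum_(j < n) ((t <= j)%N)%:R = (n - t)%:R :> R.
Proof.
move=> tn; rewrite natrB // -(sum_indicator_lt tn) -[n in n%:R](card_ord n) -sumr_const -sumrB.
by apply: eq_bigr => j _; rewrite leqNgt; case: (j < t)%N; rewrite ?subr0 ?subrr.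
Qed.

Lemma sum_neq_indicator_and (P : pred 'I_n) i :
  \sum_(j < n | j != i) (P i && P j)%:R = (P i)%:R * (\sum_(j < n) (P j)%:R - 1) :> R.
Proof.
case Pi: (P i); last by rewrite mul0r big1.
by rewrite mul1r [X in X - 1](bigD1 i) //= Pi addrAC subrr add0r.
Qed.

End Counting.

Section ChangePointStatistics.
Variables (R : realFieldType) (n t : nat).
Hypotheses (t_ge2 : (2 <= t)%N) (t_le : (t <= n - 2)%N).

Let t_le_n : (t <= n)%N. Proof. lia. Qed.
Let t_neq0 : t%:R != 0 :> R. Proof. by rewrite pnatr_eq0; lia. Qed.
Let t1_neq0 : t%:R - 1 != 0 :> R. Proof. by rewrite subr_eq0 pnatr_eq1; lia. Qed.
Let nt_neq0 : n%:R - t%:R != 0 :> R. Proof. by rewrite subr_eq0 eqr_nat; lia. Qed.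
Let nt1_neq0 : n%:R - t%:R - 1 != 0 :> R.
Proof. by rewrite -natrB // subr_eq0 pnatr_eq1; lia. Qed.
Let n_neq0 : n%:R != 0 :> R. Proof. by rewrite pnatr_eq0; lia. Qed.
Let n1_neq0 : n%:R - 1 != 0 :> R. Proof. by rewrite subr_eq0 pnatr_eq1; lia. Qed.

Definition W_weight (i j : 'I_n) : R :=
  t%:R / n%:R * ((t * (t - 1))%:R^-1 * ((i < t)%N && (j < t)%N)%:R)
  + (n - t)%:R / n%:R * (((n - t) * (n - t - 1))%:R^-1 * ((t <= i)%N && (t <= j)%N)%:R).

Lemma Wstat_pair_stat (K : 'M[R]_n) s : Wstat K t s = pair_stat W_weight K s.
Proof.
rewrite /Wstat /alpha /beta !mulr_sumr -big_split; apply: eq_bigr => i _.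
by rewrite !mulr_sumr -big_split; apply: eq_bigr => j _ /=; rewrite /W_weight; ring.
Qed.

Lemma W_weight_sym i j : W_weight i j = W_weight j i.
Proof. by rewrite /W_weight [(i < t)%N && _]andbC [(t <= i)%N && _]andbC. Qed.

Lemma W_weight_row i : \sum_(j < n | j != i) W_weight i j = n%:R^-1.
Proof.
rewrite big_split /= -!mulr_sumr.
rewrite (sum_neq_indicator_and _ (fun k : 'I_n => (k < t)%N)).
rewrite (sum_neq_indicator_and _ (fun k : 'I_n => (t <= k)%N)) /=.
rewrite sum_indicator_lt // sum_indicator_ge // !natrM !natrB //; try lia.
by case: ltnP => _ /=; field; rewrite n_neq0 nt_neq0 nt1_neq0 t_neq0 t1_neq0.
Qed.

Lemma Dstat_affine (K : 'M[R]_n) s :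
  Dstat K t s = \sum_(k < n) (((k < t)%N)%:R / (n * (n - 1))%:R) * rowcol_sum K (s k)
                - offdiag_sum K / (n * (n - 1))%:R.
Proof.
have -> : Dstat K t s
    = pair_stat (fun i j => ((i < t)%N)%:R + ((j < t)%N)%:R - 1) K s / (n * (n - 1))%:R.
  rewrite /Dstat /alpha /beta.
  set lo := \sum_(i < n) _; set hi := \sum_(i < n) _.
  have -> : pair_stat (fun i j => ((i < t)%N)%:R + ((j < t)%N)%:R - 1) K s = lo - hi.
    rewrite /pair_stat -sumrB; apply: eq_bigr => i _; rewrite -sumrB; apply: eq_bigr => j _.
    by rewrite -mulrBr; congr (_ * _); case: (ltnP i t); case: (ltnP j t) => _ _ /=; ring.
  rewrite !natrM !natrB; try lia.
  by field; rewrite n_neq0 n1_neq0 nt_neq0 nt1_neq0 t_neq0 t1_neq0.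
rewrite pair_stat_additive mulrBl mulr_suml; congr (_ - _).
by apply: eq_bigr => k _; rewrite mulrAC.
Qed.

Lemma permCov_Wstat_Dstat (K1 K2 : 'M[R]_n) : permCov (Wstat K1 t) (Dstat K2 t) = 0.
Proof.
rewrite (eq_permCov (Wstat_pair_stat K1) (Dstat_affine K2)) permCov_sum_affine_r.
apply: big1 => k _.
by rewrite (permCov_pair_stat_point W_weight_sym W_weight_row) ?mulr0 //; lia.
Qed.

End ChangePointStatistics.

Theorem mainTheorem2 (R : realFieldType) (n t : nat) (K : 'I_2 -> 'M[R]_n)
  (hsym : forall x : 'I_2, (K x)^T = K x)
  (hn : (4 <= n)%N) (ht2 : (2 <= t)%N) (htn : (t <= n - 2)%N) :
  (forall a b : 'I_2,
     permCov (Wstat (K a) t) (Dstat (K b) t) = 0)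
  /\
  (forall c1 c2 d1 d2 : R,
     permCov (fun s => c1 * Wstat (K ord0) t s + c2 * Wstat (K ord_max) t s)
             (fun s => d1 * Dstat (K ord0) t s + d2 * Dstat (K ord_max) t s) = 0).
Proof.
have cov0 a b : permCov (Wstat (K a) t) (Dstat (K b) t) = 0.
  exact: permCov_Wstat_Dstat.
split=> // c1 c2 d1 d2.
by rewrite permCov_bilin !cov0; ring.
Qed.
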